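(* Let $R$ be a commutative ring with $1\neq 0$, $S\subseteq R$ a multiplicatively closed subset, and $M$ a distributive $R$-module. If $N$ and $K$ are $S$-copure submodules of $M$, then $N\cap K$ is an $S$-copure submodule of $M$.
   Context: All rings are commutative with $1\neq 0$ and all modules are unital. A multiplicatively closed subset (m.c.s.) $S$ of $R$ is a subset with $0\notin S$, $1\in S$, and $ss'\in S$ for all $s,s'\in S$. $M$ is distributive if its lattice of submodules is distributive, i.e., $A\cap(B+C)=(A\cap B)+(A\cap C)$ for all submodules $A,B,C$. For an ideal $I$ and submodule $L$, $(L:_M I)=\{m\in M: Im\subseteq L\}$ and $(0:_M I)=\{m\in M: Im=0\}$. A submodule $L$ of $M$ is $S$-copure if there exists $s\in S$ such that $s(L:_M I)\subseteq L+(0:_M I)$ for every ideal $I$ of $R$. *)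

From HB Require Import structures.
From mathcomp Require Import all_boot all_order all_algebra.
Set Implicit Arguments. Unset Strict Implicit. Unset Printing Implicit Defensive.
Import GRing.Theory.
Local Open Scope ring_scope.

Definition is_submodule (R : comNzRingType) (M : lmodType R) (L : M -> Prop) : Prop :=
  [/\ L 0, (forall x y, L x -> L y -> L (x + y)) & (forall (r : R) x, L x -> L (r *: x))].

Definition is_ideal (R : comNzRingType) (I : R -> Prop) : Prop :=
  [/\ I 0, (forall x y, I x -> I y -> I (x + y)) & (forall r x, I x -> I (r * x))].

Definition is_mcs (R : comNzRingType) (S : R -> Prop) : Prop :=
  [/\ ~ S 0, S 1 & (forall s t, S s -> S t -> S (s * t))].

Definition sub_inter (R : comNzRingType) (M : lmodType R) (A B : M -> Prop) : M -> Prop :=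
  fun m => A m /\ B m.

Definition sub_sum (R : comNzRingType) (M : lmodType R) (A B : M -> Prop) : M -> Prop :=
  fun m => exists a b, [/\ A a, B b & m = a + b].

Definition colon (R : comNzRingType) (M : lmodType R) (L : M -> Prop) (I : R -> Prop) : M -> Prop :=
  fun m => forall r, I r -> L (r *: m).

Definition annM (R : comNzRingType) (M : lmodType R) (I : R -> Prop) : M -> Prop :=
  fun m => forall r, I r -> r *: m = 0.

Definition distributive_module (R : comNzRingType) (M : lmodType R) : Prop :=
  forall A B C : M -> Prop, is_submodule A -> is_submodule B -> is_submodule C ->
    forall m, sub_inter A (sub_sum B C) m <-> sub_sum (sub_inter A B) (sub_inter A C) m.

Definition S_copure (R : comNzRingType) (M : lmodType R) (S : R -> Prop) (L : M -> Prop) : Prop :=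
  exists s, S s /\ forall I : R -> Prop, is_ideal I ->
    forall m, colon L I m -> sub_sum L (annM I) (s *: m).

From HB Require Import structures.
From mathcomp Require Import all_boot all_order all_algebra.
Set Implicit Arguments. Unset Strict Implicit.
Import GRing.Theory.
Local Open Scope ring_scope.

(* Let s1, s2 in S witness that N and K are S-copure; we show that s1 * s2
   witnesses that N ∩ K is S-copure.  Fix an ideal I and m with
   I m ⊆ N ∩ K.  Then m lies in both colons (N :_M I) and (K :_M I), so
   copureness of N and K, scaled by the other witness, puts (s1 s2) m in
   (N + (0 :_M I)) ∩ (K + (0 :_M I)).  In a distributive module this
   intersection is contained in (N ∩ K) + (0 :_M I), which is the claim. *)

Section Submodules.
Variables (R : comNzRingType) (M : lmodType R).

Lemma annM_submodule (I : R -> Prop) : is_submodule (annM (M:=M) I).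
Proof.
split.
- by move=> r _; rewrite scaler0.
- by move=> x y hx hy r hr; rewrite scalerDr hx // hy // addr0.
- by move=> a x hx r hr; rewrite scalerA mulrC -scalerA hx // scaler0.
Qed.

Lemma sub_sum_submodule (A B : M -> Prop) :
  is_submodule A -> is_submodule B -> is_submodule (sub_sum A B).
Proof.
case=> A0 AD AZ [B0 BD BZ]; split.
- by exists 0, 0; split => //; rewrite addr0.
- move=> _ _ [a [b [ha hb ->]]] [a' [b' [ha' hb' ->]]].
  by exists (a + a'), (b + b'); split; [auto | auto | rewrite addrACA].
- move=> r _ [a [b [ha hb ->]]].
  by exists (r *: a), (r *: b); split; [auto | auto | rewrite scalerDr].
Qed.

Lemma sub_inter_submodule (A B : M -> Prop) :
  is_submodule A -> is_submodule B -> is_submodule (sub_inter A B).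
Proof.
case=> A0 AD AZ [B0 BD BZ]; split.
- by split.
- by move=> x y [? ?] [? ?]; split; auto.
- by move=> r x [? ?]; split; auto.
Qed.

Lemma distributive_inter_sum (A B C : M -> Prop) :
  distributive_module M ->
  is_submodule A -> is_submodule B -> is_submodule C ->
  forall x, sub_sum A C x -> sub_sum B C x -> sub_sum (sub_inter A B) C x.
Proof.
move=> distrM subA subB subC x xAC xBC.
(* x ∈ (A + C) ∩ (B + C) = ((A + C) ∩ B) + ((A + C) ∩ C) *)
have [y [z [[yAC yB] [_ zC] ->]]] :=
  proj1 (distrM (sub_sum A C) B C (sub_sum_submodule subA subC) subB subC x) (conj xAC xBC).
(* y ∈ B ∩ (A + C) = (B ∩ A) + (B ∩ C) *)
have [u [v [[uB uA] [_ vC] ->]]] :=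
  proj1 (distrM B A C subB subA subC y) (conj yB yAC).
have [_ CD _] := subC.
by exists u, (v + z); split; [by [] | exact: CD | rewrite addrA].
Qed.

End Submodules.

Section Copure.
Variables (R : comNzRingType) (M : lmodType R).

Definition copure_witness (L : M -> Prop) (s : R) : Prop :=
  forall I : R -> Prop, is_ideal I ->
    forall m, colon L I m -> sub_sum L (annM I) (s *: m).

Lemma copure_witness_mull (L : M -> Prop) (s t : R) :
  is_submodule L -> copure_witness L s -> copure_witness L (t * s).
Proof.
move=> subL wit I idI m mLI.
have [_ _ sumZ] := sub_sum_submodule subL (@annM_submodule _ M I).
by rewrite -scalerA; apply: sumZ; apply: wit.
Qed.

Lemma colon_inter (A B : M -> Prop) (I : R -> Prop) (m : M) :
  colon (sub_inter A B) I m -> colon A I m /\ colon B I m.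
Proof. by move=> mABI; split=> r /mABI []. Qed.

End Copure.

Theorem theorem3p5 (R : comNzRingType) (M : lmodType R) (S : R -> Prop)
  (N K : M -> Prop) :
  is_mcs S -> distributive_module M ->
  is_submodule N -> is_submodule K ->
  S_copure S N -> S_copure S K ->
  is_submodule (sub_inter N K) /\ S_copure S (sub_inter N K).
Proof.
move=> [_ _ S_mul] distrM subN subK [s1 [Ss1 witN]] [s2 [Ss2 witK]].
split; first exact: sub_inter_submodule.
exists (s1 * s2); split; first exact: S_mul.
move=> I idI m /colon_inter [mNI mKI].
have NA : sub_sum N (annM I) ((s1 * s2) *: m).
  by rewrite mulrC; apply: (copure_witness_mull s2 subN witN).
have KA : sub_sum K (annM I) ((s1 * s2) *: m).
  exact: (copure_witness_mull s1 subK witK).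
exact: (distributive_inter_sum distrM subN subK (@annM_submodule _ M I) NA KA).
Qed.
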